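(* Let $\alpha\in\mathbb R$ and let $\Sigma$ be a round sphere in $\mathbb R^3$ (with the origin removed if it lies on it). Then $\Sigma$ is $\alpha$-stationary if and only if either (1) $\alpha=-2$ and $\Sigma$ is centered at the origin, or (2) $\alpha=-4$ and $\Sigma$ contains the origin.
   Context: Let $\Sigma$ be a connected oriented surface immersed in $\mathbb R^3\setminus\{0\}$ with unit normal $\nu$ and mean curvature $H$ (sum of the principal curvatures, so a sphere of radius $r$ has $H=2/r$ for the inward normal). For $\alpha\in\mathbb R$, $\Sigma$ is called $\alpha$-stationary if $H(p)=\alpha\,\frac{\langle\nu(p),p\rangle}{|p|^2}$ for all $p\in\Sigma$. *)

From mathcomp Require Import all_boot all_order all_algebra.
From mathcomp Require Import reals.
Set Implicit Arguments. Unset Strict Implicit. Unset Printing Implicit Defensive.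
Import Order.TTheory GRing.Theory Num.Theory.
Local Open Scope ring_scope.

Definition dot3 {R : realType} (u v : 'rV[R]_3) : R := (u *m v^T) 0 0.

Definition on_sphere {R : realType} (c : 'rV[R]_3) (r : R) (p : 'rV[R]_3) : Prop :=
  dot3 (p - c) (p - c) = r ^+ 2.

(* Orientation of the sphere: s = 1 is the inward unit normal, s = -1 the
   outward one.  nu_s(p) = s (c - p)/r, and with the convention H = sum of
   principal curvatures, H_s = s * 2 / r (so H = 2/r for the inward normal). *)
Definition sphere_normal {R : realType} (s : R) (c : 'rV[R]_3) (r : R)
  (p : 'rV[R]_3) : 'rV[R]_3 := (s / r) *: (c - p).
Definition sphere_mean_curv {R : realType} (s r : R) : R := s * 2 / r.

Definition sphere_alpha_stationary {R : realType} (alpha s : R)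
  (c : 'rV[R]_3) (r : R) : Prop :=
  forall p : 'rV[R]_3, on_sphere c r p -> p != 0 ->
    sphere_mean_curv s r = alpha * dot3 (sphere_normal s c r p) p / dot3 p p.

(** On a sphere of center c and radius r, 2 <c, p> = |p|^2 + |c|^2 - r^2, so
   α-stationarity at p is equivalent to (4 + α) |p|^2 = α (|c|^2 - r^2).  If
   α ≠ -4 this forces |p| to be constant on the sphere, which happens only
   when c = 0 (compare the antipodal points c ± r e_i), and then α = -2.  If
   α = -4 it forces |c| = r, i.e. the sphere passes through the origin. *)

From mathcomp Require Import all_boot all_order all_algebra.
From mathcomp Require Import reals.
From mathcomp Require Import ring lra.
Import Order.TTheory GRing.Theory Num.Theory.
Local Open Scope ring_scope.

Section Dot3.
Context {R : realType}.
Implicit Types (u v w : 'rV[R]_3) (a : R).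

Lemma dot3E u v : dot3 u v = \sum_i u 0 i * v 0 i.
Proof. by rewrite /dot3 mxE; apply: eq_bigr => i _; rewrite mxE. Qed.

Lemma dot3_0l v : dot3 0 v = 0.
Proof. by rewrite /dot3 mul0mx mxE. Qed.

Lemma dot3C u v : dot3 u v = dot3 v u.
Proof. by rewrite !dot3E; apply: eq_bigr => i _; rewrite mulrC. Qed.

Lemma dot3Dl u v w : dot3 (u + v) w = dot3 u w + dot3 v w.
Proof. by rewrite /dot3 mulmxDl mxE. Qed.

Lemma dot3Nl u v : dot3 (- u) v = - dot3 u v.
Proof. by rewrite /dot3 mulNmx mxE. Qed.

Lemma dot3Bl u v w : dot3 (u - v) w = dot3 u w - dot3 v w.
Proof. by rewrite dot3Dl dot3Nl. Qed.

Lemma dot3Zl a u v : dot3 (a *: u) v = a * dot3 u v.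
Proof. by rewrite /dot3 -scalemxAl mxE. Qed.

Lemma dot3Zr a u v : dot3 u (a *: v) = a * dot3 u v.
Proof. by rewrite dot3C dot3Zl dot3C. Qed.

Lemma dot3_normB u v : dot3 (u - v) (u - v) = dot3 u u - 2 * dot3 u v + dot3 v v.
Proof.
rewrite !dot3Bl [dot3 u (u - v)]dot3C [dot3 v (u - v)]dot3C !dot3Bl [dot3 v u]dot3C.
ring.
Qed.

Lemma dot3Nr u v : dot3 u (- v) = - dot3 u v.
Proof. by rewrite dot3C dot3Nl dot3C. Qed.

Lemma dot3_normD u v : dot3 (u + v) (u + v) = dot3 u u + 2 * dot3 u v + dot3 v v.
Proof.
by rewrite -[v]opprK dot3_normB dot3Nr dot3Nl dot3Nr !opprK mulrN opprK.
Qed.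

Lemma dot3_delta u i : dot3 u 'e_i = u 0 i.
Proof. by rewrite /dot3 trmx_delta -colE mxE. Qed.

Lemma dot3_eq0 u : (dot3 u u == 0) = (u == 0).
Proof.
apply/idP/eqP => [|->]; last by rewrite dot3_0l.
rewrite dot3E => /eqP/psumr_eq0P u2_eq0; apply/rowP => i; rewrite mxE.
by apply/eqP; rewrite -sqrf_eq0 expr2 u2_eq0 // => j _; rewrite -expr2 sqr_ge0.
Qed.

End Dot3.

Section Sphere.
Context {R : realType}.
Variables (c : 'rV[R]_3) (r : R).
Hypothesis r_gt0 : 0 < r.

Lemma on_sphere_dot3 p : on_sphere c r p -> 2 * dot3 c p = dot3 p p + dot3 c c - r ^+ 2.
Proof. by rewrite /on_sphere dot3_normB [dot3 p c]dot3C => <-; ring. Qed.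

Lemma on_sphere_shift_delta t i : t ^+ 2 = r ^+ 2 -> on_sphere c r (c + t *: 'e_i).
Proof.
by rewrite /on_sphere addrC addKr dot3Zl dot3Zr dot3_delta mxE !eqxx mulr1 expr2.
Qed.

Lemma sphere_center_eq0 :
    (forall p q, on_sphere c r p -> on_sphere c r q -> dot3 p p = dot3 q q) ->
  c = 0.
Proof.
move=> norm_const; apply/rowP => i; rewrite mxE.
have norm_shift t : dot3 (c + t *: 'e_i) (c + t *: 'e_i)
    = dot3 c c + 2 * t * c 0 i + t ^+ 2.
  by rewrite dot3_normD !dot3Zr dot3Zl !dot3_delta mxE !eqxx mulr1 mulrA expr2.
have := norm_const _ _ (on_sphere_shift_delta r i (erefl (r ^+ 2)))
                       (on_sphere_shift_delta (- r) i (sqrrN r)).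
rewrite !norm_shift sqrrN => /eqP; rewrite -subr_eq0.
have -> : dot3 c c + 2 * r * c 0 i + r ^+ 2 - (dot3 c c + 2 * - r * c 0 i + r ^+ 2)
    = (4 * r) * c 0 i by ring.
by rewrite !mulf_eq0 pnatr_eq0 (gt_eqF r_gt0) /= => /eqP.
Qed.

Variables (alpha s : R).
Hypothesis s_neq0 : s != 0.

Lemma sphere_stationary_atE p : on_sphere c r p -> p != 0 ->
  sphere_mean_curv s r = alpha * dot3 (sphere_normal s c r p) p / dot3 p p <->
  (4 + alpha) * dot3 p p = alpha * (dot3 c c - r ^+ 2).
Proof.
move=> /on_sphere_dot3 cpE p_neq0.
have pp_neq0 : dot3 p p != 0 by rewrite dot3_eq0.
have r_neq0 : r != 0 by rewrite gt_eqF.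
have cp_half : dot3 c p = (dot3 p p + dot3 c c - r ^+ 2) / 2.
  by rewrite -cpE; field.
have diffE : sphere_mean_curv s r - alpha * dot3 (sphere_normal s c r p) p / dot3 p p
    = s / (2 * r * dot3 p p) * ((4 + alpha) * dot3 p p - alpha * (dot3 c c - r ^+ 2)).
  by rewrite /sphere_mean_curv /sphere_normal dot3Zl dot3Bl cp_half; field;
     rewrite pp_neq0 r_neq0.
rewrite (rwP eqP) -subr_eq0 diffE mulf_eq0 subr_eq0.
by rewrite !mulf_eq0 invr_eq0 !mulf_eq0 (negbTE s_neq0) (negbTE r_neq0)
           (negbTE pp_neq0) pnatr_eq0 /= -(rwP eqP).
Qed.

Lemma sphere_alpha_stationaryE :
  sphere_alpha_stationary alpha s c r <->
  forall p, on_sphere c r p -> (4 + alpha) * dot3 p p = alpha * (dot3 c c - r ^+ 2).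
Proof.
split=> [stat p p_on|norm_eq p p_on p_neq0]; last first.
  by apply/(sphere_stationary_atE p p_on p_neq0)/norm_eq.
have [p0|p_neq0] := eqVneq p 0; last first.
  by apply/(sphere_stationary_atE p p_on p_neq0)/stat.
move: p_on; rewrite /on_sphere p0 sub0r dot3Nl dot3C dot3Nl opprK => <-.
by rewrite subrr dot3_0l !mulr0.
Qed.

End Sphere.

Theorem mainTheorem3 (R : realType) (alpha : R) (c : 'rV[R]_3) (r : R)
  (s : R) (hr : 0 < r) (hs : s = 1 \/ s = -1) :
  sphere_alpha_stationary alpha s c r <->
  ((alpha = -2 /\ c = 0) \/ (alpha = -4 /\ dot3 c c = r ^+ 2)).
Proof.
have s_neq0 : s != 0 by case: hs => ->; rewrite ?oppr_eq0 oner_eq0.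
rewrite sphere_alpha_stationaryE //.
have on_witness := on_sphere_shift_delta c r r 0 (erefl (r ^+ 2)).
split=> [norm_eq|[[-> ->]|[-> c_on]] p p_on]; last 2 first.
- by move: p_on; rewrite /on_sphere subr0 => ->; rewrite dot3_0l; ring.
- by rewrite c_on; ring.
have [alpha4|alpha4] := eqVneq alpha (-4).
  right; split=> //; move: (norm_eq _ on_witness); rewrite alpha4; lra.
have c0 : c = 0.
  apply: (sphere_center_eq0 c r hr) => p q p_on q_on.
  by apply: (@mulfI _ (4 + alpha)); rewrite ?norm_eq // addrC addr_eq0.
left; split=> //; have := norm_eq _ on_witness.
move: on_witness; rewrite c0 /on_sphere subr0 dot3_0l => -> alpha_eq.
have : (alpha + 2) * r ^+ 2 = 0 by lra.
by move/eqP; rewrite mulf_eq0 expf_eq0 (gt_eqF hr) andbF orbF addr_eq0 => /eqP.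
Qed.
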